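(* Let $(\Omega,\mathcal{F},\mathbb{P})$ be a nonatomic probability space, let $1\le q<\infty$, let $u(x)=-|x|^q$ for $x<0$ and $u(x)=0$ for $x\ge0$, let $\alpha<0$, and set $\mathcal{A}_u^\infty=\{X\in L^\infty:\mathbb{E}[u(X)]\ge\alpha\}$. Let $S=(S_0,S_T)$ be a traded asset with $S_T\in L^\infty$ and assume $\rho_{\mathcal{A}_u^\infty,S}$ is finite-valued on $L^\infty$. Then $\mathrm{Index}_{\mathrm{fin}}(\rho_{\mathcal{A}_u^\infty,S})=q$ and the infimum defining the index is attained.
   Context: A traded asset is $S=(S_0,S_T)$ with $S_0>0$, $S_T\ge0$ a.s., $S_T\ne0$. For $\mathcal{B}\subset L^\infty$, $\rho_{\mathcal{B},S}(X)=\inf\{m\in\mathbb{R}:X+\frac{m}{S_0}S_T\in\mathcal{B}\}$. For a convex, law-invariant acceptance set $\mathcal{A}\subset L^\infty$ with $\rho_{\mathcal{A},S}$ finite-valued on $L^\infty$, $\mathrm{Index}_{\mathrm{fin}}(\rho_{\mathcal{A},S})=\inf\{p\in[1,\infty):\text{the closure of }\mathcal{A}\text{ in }L^p\text{ has nonempty interior in }L^p\}$, with $\inf\emptyset=\infty$; the index is attained if this infimum belongs to the set. *)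

From HB Require Import structures.
From mathcomp Require Import all_boot all_order all_algebra.
From mathcomp Require Import all_classical all_reals all_analysis.
Set Implicit Arguments. Unset Strict Implicit. Unset Printing Implicit Defensive.
Import Order.TTheory GRing.Theory Num.Theory.
Local Open Scope classical_set_scope.
Local Open Scope ring_scope.

Section Defs.
Context {d : measure_display} {Omega : measurableType d} {R : realType}.
Variable P : probability Omega R.

Definition nonatomic : Prop :=
  forall A : set Omega, measurable A -> (0 < P A)%E ->
    exists B : set Omega, [/\ measurable B, B `<=` A, (0 < P B)%E & (P B < P A)%E].

(* L^infty: measurable and essentially bounded (functions, not classes) *)
Definition Linf (X : Omega -> R) : Prop :=
  measurable_fun setT X /\ exists M : R, {ae P, forall w, `|X w| <= M}.

Definition Lp (p : R) (X : Omega -> R) : Prop :=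
  measurable_fun setT X /\ ('N[P]_(p%:E)[EFin \o X] < +oo)%E.

Definition Lp_dist (p : R) (X Y : Omega -> R) : \bar R :=
  'N[P]_(p%:E)[EFin \o (X \- Y)].

Definition Lp_closure (p : R) (A : set (Omega -> R)) : set (Omega -> R) :=
  [set X | Lp p X /\ forall eps : R, 0 < eps ->
     exists2 Y, A Y & (Lp_dist p X Y < eps%:E)%E].

Definition Lp_int_nonempty (p : R) (B : set (Omega -> R)) : Prop :=
  exists X, Lp p X /\ exists2 eps : R, 0 < eps &
    forall Y, Lp p Y -> (Lp_dist p Y X < eps%:E)%E -> B Y.

Definition rho (B : set (Omega -> R)) (S0 : R) (ST : Omega -> R)
    (X : Omega -> R) : \bar R :=
  ereal_inf [set m%:E | m in [set m : R | B (X \+ (fun w => m / S0 * ST w))]].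

Definition rho_finite_on_Linf (B : set (Omega -> R)) S0 ST : Prop :=
  forall X, Linf X -> rho B S0 ST X \is a fin_num.

Definition index_set (A : set (Omega -> R)) : set R :=
  [set p | 1 <= p /\ Lp_int_nonempty p (Lp_closure p A)].

(* Index_fin, with inf of the empty set = +oo *)
Definition index_fin (A : set (Omega -> R)) : \bar R :=
  ereal_inf [set p%:E | p in index_set A].

Definition traded_asset (S0 : R) (ST : Omega -> R) : Prop :=
  [/\ 0 < S0, measurable_fun setT ST, {ae P, forall w, 0 <= ST w}
    & ~ {ae P, forall w, ST w = 0}].
End Defs.

Definition u_q {R : realType} (q : R) (x : R) : R :=
  if x < 0 then - (`|x| `^ q) else 0.

Definition A_u {d : measure_display} {Omega : measurableType d} {R : realType}
  (P : probability Omega R) (q alpha : R) : set (Omega -> R) :=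
  [set X | Linf P X /\ (\int[P]_w (u_q q (X w))%:E >= alpha%:E)%E].

From HB Require Import structures.
From mathcomp Require Import all_boot all_order all_algebra.
From mathcomp Require Import all_classical all_reals all_analysis.
From mathcomp Require Import measurable_realfun.
From mathcomp Require Import lra ring.
Import Order.TTheory GRing.Theory Num.Theory.
Local Open Scope classical_set_scope.
Local Open Scope ring_scope.

(* For p = q the L^q ball of radius (-alpha)^(1/q) around 0 lies in the L^q
   closure of A_u: truncating an element Y of that ball gives bounded positions
   whose shortfall E[(Y^-)^q] is no larger, and the truncations converge to Y in
   L^q by dominated convergence.  For p < q no L^p ball around any X survives:
   on a set B of small mass b on which X is bounded (nonatomicity), replace X by
   -2L with L^q b = -2 alpha.  This moves X by about L b^(1/p), which is small
   because p < q, but every Z in A_u lies below -L on mass at most b/2, so Z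
   stays at L^p distance at least L (b/2)^(1/p) from the perturbed position. *)

Section measurability.
Context {d : measure_display} {T : measurableType d} {R : realType}.
Implicit Types f g : T -> R.

Lemma measurable_EFin_powR (q : R) f : measurable_fun setT f ->
  measurable_fun setT (fun w => (f w `^ q)%:E).
Proof.
by move=> mf; apply/measurable_EFinP; exact: measurableT_comp (measurable_powR q) mf.
Qed.

Lemma measurable_set_ler f g : measurable_fun setT f -> measurable_fun setT g ->
  measurable [set w | f w <= g w].
Proof. by move=> mf mg; rewrite -[X in measurable X]setTI; exact: measurable_fun_le. Qed.

Lemma measurable_set_ltr f g : measurable_fun setT f -> measurable_fun setT g ->
  measurable [set w | f w < g w].
Proof.
move=> mf mg.
have : measurable ([set: T] `&` (fun w => f w < g w) @^-1` [set true]).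
  exact: measurable_fun_ltr.
by rewrite setTI; congr measurable; apply/seteqP; split.
Qed.

Lemma measurable_fun_mem (B : set T) : measurable B ->
  measurable_fun setT (fun w => w \in B).
Proof.
move=> mB; apply: (measurable_fun_bool true).
rewrite setTI (_ : _ @^-1` _ = B) //.
by apply/seteqP; split => w /=; [move/set_mem | move/mem_set].
Qed.

End measurability.

Section Lp_probability.
Context {d : measure_display} {Omega : measurableType d} {R : realType}.
Variable P : probability Omega R.
Implicit Types (p : R) (f X Y : Omega -> R).

Lemma Lnorm_powR p f : 0 < p ->
  ('N[P]_(p%:E)[EFin \o f] `^ p = \int[P]_w (`|f w| `^ p)%:E)%E.
Proof. by move=> p0; rewrite poweR_Lnorm ?gt_eqF. Qed.

Lemma Lp_integral_lty p f : 0 < p -> Lp P p f ->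
  (\int[P]_w (`|f w| `^ p)%:E < +oo)%E.
Proof. by move=> p0 [_ h]; rewrite -Lnorm_powR //; exact: poweR_lty. Qed.

Lemma Lp_integral_ltyP p f : 0 < p -> measurable_fun setT f ->
  (\int[P]_w (`|f w| `^ p)%:E < +oo)%E -> Lp P p f.
Proof.
move=> p0 mf h; split => //; rewrite ltNge; apply/negP; rewrite leye_eq => /eqP E.
by move: h; rewrite -Lnorm_powR // E poweRyr ?gt_eqF.
Qed.

Lemma Lp_dist_ltP p e X Y : 0 < p -> 0 < e ->
  (Lp_dist P p X Y < e%:E)%E <-> (\int[P]_w (`|X w - Y w| `^ p)%:E < (e `^ p)%:E)%E.
Proof.
move=> p0 e0; rewrite -(Lnorm_powR p (X \- Y) p0) -/(Lp_dist P p X Y).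
have N0 : (0 <= Lp_dist P p X Y)%E by exact: Lnorm_ge0.
split.
- case: (Lp_dist P p X Y) N0 => //= n; rewrite lee_fin !lte_fin => n0 ne.
  by apply: gt0_ltr_powR; rewrite ?nnegrE ?(ltW e0).
- rewrite -poweR_EFin => h; rewrite ltNge; apply/negP => eN; move: h; apply/negP.
  rewrite -leNgt; apply: (gt0_ler_poweR (ltW p0)) => //.
  + by rewrite in_itv /= lee_fin (ltW e0) leey.
  + by rewrite in_itv /= N0 leey.
Qed.

Lemma probability_fineK {A : set Omega} : measurable A -> ((fine (P A))%:E = P A)%E.
Proof. by move=> mA; rewrite fineK // fin_num_measure. Qed.

Lemma integral_scale_indic (k : R) (A : set Omega) : 0 <= k -> measurable A ->
  (\int[P]_w (k * \1_A w)%:E = k%:E * P A)%E.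
Proof.
move=> k0 mA; under eq_integral do rewrite EFinM.
rewrite ge0_integralZl_EFin //; first by rewrite integral_indic // setIT.
by apply/measurable_EFinP; exact: measurable_indic.
Qed.

Lemma le_integral_powR_measure {p L : R} {A : set Omega} {f} : 0 < p -> 0 <= L ->
  measurable A -> measurable_fun setT f -> (forall w, A w -> L <= `|f w|) ->
  ((L `^ p)%:E * P A <= \int[P]_w (`|f w| `^ p)%:E)%E.
Proof.
move=> p0 L0 mA mf fL; rewrite -integral_scale_indic ?powR_ge0 //.
apply: ge0_le_integral => //.
- by move=> w _; rewrite lee_fin mulr_ge0 ?powR_ge0.
- apply/measurable_EFinP; apply: measurable_funM; first exact: measurable_cst.
  exact: measurable_indic.
- exact/measurable_EFin_powR/measurableT_comp.
move=> w _; rewrite lee_fin indicE; have [/set_mem Aw|_] := boolP (w \in A).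
  by rewrite mulr1 ge0_ler_powR ?nnegrE ?(ltW p0) ?fL.
by rewrite mulr0 powR_ge0.
Qed.

End Lp_probability.

Section nonatomic.
Context {d : measure_display} {Omega : measurableType d} {R : realType}.
Variable P : probability Omega R.

Lemma exists_bounded_set {X : Omega -> R} : measurable_fun setT X ->
  exists M : nat, (0 < P [set w | (`|X w| <= M%:R)%R])%E.
Proof.
move=> mX; apply: contrapT => noM.
pose F n := [set w | `|X w| <= n%:R].
have F0 n : P (F n) = 0%E.
  apply/eqP; rewrite eq_le measure_ge0 andbT leNgt; apply/negP => PF.
  by apply: noM; exists n.
have mF n : measurable (F n).
  by apply: measurable_set_ler; [exact: measurableT_comp | exact: measurable_cst].
have UF : \bigcup_n F n = setT.
  apply/seteqP; split => // w _; exists (Num.bound `|X w|) => //=.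
  exact: ltW (archi_boundP _).
have ndF : nondecreasing_seq F.
  apply/nondecreasing_seqP => n; rewrite subsetEset => w /= /le_trans; apply.
  by rewrite ler_nat.
have := @nondecreasing_cvg_mu _ _ _ P F mF.
rewrite UF => /(_ measurableT ndF); rewrite (_ : _ \o F = cst 0%E); last exact/funext.
move/(cvg_lim (@ereal_hausdorff R)); rewrite lim_cst // => P0.
by have := probability_setT P; rewrite -P0 => /eqP; rewrite eqe eq_sym oner_eq0.
Qed.

Hypothesis P_nonatomic : nonatomic P.

Lemma nonatomic_halve {A : set Omega} : measurable A -> (0 < P A)%E ->
  exists B, [/\ measurable B, B `<=` A, (0 < P B)%E & (P B <= P A * 2^-1%:E)%E].
Proof.
move=> mA PA0; have [C [mC CA PC0 PCA]] := P_nonatomic _ mA PA0.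
have PAC : P (A `\` C) = (P A - P C)%E.
  by rewrite measureD // ?setIidr // -ge0_fin_numE ?measure_ge0 ?fin_num_measure.
have [a Pa] : exists a, P A = a%:E by exists (fine (P A)); rewrite probability_fineK.
have [c Pc] : exists c, P C = c%:E by exists (fine (P C)); rewrite probability_fineK.
rewrite Pa Pc !lte_fin in PA0 PC0 PCA PAC *.
have [Csmall|Cbig] := leP c (a / 2).
  by exists C; split; rewrite // ?Pc ?lte_fin // -EFinM lee_fin.
exists (A `\` C); split; first exact: measurableD.
- by move=> w [].
- by rewrite PAC lte_fin subr_gt0.
- by rewrite PAC -EFinM lee_fin; lra.
Qed.

Lemma nonatomic_small_subset {A : set Omega} {del : R} : measurable A ->
  (0 < P A)%E -> 0 < del ->
  exists B, [/\ measurable B, B `<=` A, (0 < P B)%E & (P B <= del%:E)%E].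
Proof.
move=> mA PA0 del0.
have halving n : exists B, [/\ measurable B, B `<=` A, (0 < P B)%E
    & (P B <= (2 ^+ n)^-1%:E)%E].
  elim: n => [|n [B [mB BA PB0 PBn]]].
    by exists A; split; rewrite // expr0 invr1 probability_le1.
  have [C [mC CB PC0 PCB]] := nonatomic_halve mB PB0.
  exists C; split => //; first exact: subset_trans CB BA.
  by apply: (le_trans PCB); rewrite exprS invfM mulrC EFinM lee_wpmul2r.
have [n le_n] : exists n, (2 ^+ n)^-1 <= del.
  exists (Num.bound del^-1); rewrite invf_ple ?posrE ?exprn_gt0 //.
  apply: ltW; apply: (lt_le_trans (archi_boundP _)); first by rewrite invr_ge0 ltW.
  by rewrite -natrX ler_nat ltnW // ltn_expl.
have [B [mB BA PB0 PBn]] := halving n.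
by exists B; split => //; apply: le_trans PBn _; rewrite lee_fin.
Qed.

End nonatomic.

Lemma u_qE {R : realType} (q x : R) : 0 < q -> u_q q x = - Num.max (- x) 0 `^ q.
Proof.
move=> q0; rewrite /u_q; case: ifPn => x0.
- by rewrite ltr0_norm // (max_idPl _) // oppr_ge0 ltW.
- by rewrite (max_idPr _) ?powR0 ?oppr0 ?gt_eqF // oppr_le0 leNgt.
Qed.

Section loss.
Context {d : measure_display} {Omega : measurableType d} {R : realType}.
Variable P : probability Omega R.

Lemma integral_u_q (q : R) (Z : Omega -> R) : 0 < q ->
  (\int[P]_w (u_q q (Z w))%:E = - \int[P]_w (Num.max (- Z w) 0 `^ q)%:E)%E.
Proof.
move=> q0; rewrite -integral_ge0N; last by move=> w _; rewrite lee_fin powR_ge0.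
by apply: eq_integral => w _; rewrite u_qE // EFinN.
Qed.

Lemma u_q_tail {q alpha L : R} {Z : Omega -> R} : 0 < q -> 0 < L ->
  measurable_fun setT Z -> (alpha%:E <= \int[P]_w (u_q q (Z w))%:E)%E ->
  ((L `^ q)%:E * P [set w | (Z w < - L)%R] <= (- alpha)%:E)%E.
Proof.
move=> q0 L0 mZ; rewrite integral_u_q // leeNr -EFinN; apply: le_trans.
have -> : (\int[P]_w (Num.max (- Z w) 0 `^ q)%:E =
           \int[P]_w (`|Num.max (- Z w) 0| `^ q)%:E)%E.
  by apply: eq_integral => w _; rewrite ger0_norm // le_max lexx orbT.
apply: le_integral_powR_measure; rewrite ?(ltW L0) //.
- by apply: measurable_set_ltr => //; exact: measurable_cst.
- exact: measurable_funrneg.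
by move=> w /= ZL; rewrite ger0_norm ?le_max ?lexx ?orbT //; apply/orP; left; lra.
Qed.

End loss.

Definition truncate {T : Type} {R : realType} (n : nat) (Y : T -> R) (w : T) : R :=
  if `|Y w| <= n%:R then Y w else 0.

Section truncation.
Context {d : measure_display} {Omega : measurableType d} {R : realType}.
Variable P : probability Omega R.
Implicit Types (Y : Omega -> R) (n : nat).

Lemma measurable_truncate n Y : measurable_fun setT Y ->
  measurable_fun setT (truncate n Y).
Proof.
move=> mY; apply: measurable_fun_ifT => //.
by apply: measurable_fun_ler => //; exact: measurableT_comp.
Qed.

Lemma Linf_truncate n Y : measurable_fun setT Y -> Linf P (truncate n Y).
Proof.
move=> mY; split; first exact: measurable_truncate.
by exists n%:R; apply: aeW => w; rewrite /truncate; case: ifPn; rewrite ?normr0.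
Qed.

Lemma norm_truncate_le n Y w : `|truncate n Y w| <= `|Y w|.
Proof. by rewrite /truncate; case: ifPn; rewrite ?normr0. Qed.

Lemma norm_sub_truncate_le n Y w : `|Y w - truncate n Y w| <= `|Y w|.
Proof. by rewrite /truncate; case: ifPn; rewrite ?subrr ?normr0 ?subr0. Qed.

Lemma Lp_dist_truncate_lt (p e : R) Y : 0 < p -> 0 < e -> Lp P p Y ->
  exists n, (Lp_dist P p Y (truncate n Y) < e%:E)%E.
Proof.
move=> p0 e0 LY; have mY := LY.1.
have m_dist n : measurable_fun setT (fun w => (`|Y w - truncate n Y w| `^ p)%:E).
  apply: measurable_EFin_powR; apply: measurableT_comp => //.
  exact/measurable_funB/measurable_truncate.
have dist_cvg : {ae P, forall w, setT w ->
    (fun n => (`|Y w - truncate n Y w| `^ p)%:E) @ \oo --> (cst 0%E : _ -> \bar R) w}.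
  apply: aeW => w _; apply: cvg_near_cst; exists (Num.bound `|Y w|) => // n /= Yn.
  rewrite /truncate ifT ?subrr ?normr0 ?powR0 ?gt_eqF //.
  by apply/ltW/(lt_le_trans (archi_boundP (normr_ge0 _))); rewrite ler_nat.
have Yp_int : P.-integrable setT (fun w => (`|Y w| `^ p)%:E).
  apply/integrableP; split; first exact/measurable_EFin_powR/measurableT_comp.
  under eq_integral do rewrite /= ger0_norm ?powR_ge0 //.
  exact: Lp_integral_lty.
have dist_dom : {ae P, forall w n, setT w ->
    (`|(`|Y w - truncate n Y w| `^ p)%:E| <= (`|Y w| `^ p)%:E)%E}.
  apply: aeW => w n _; rewrite /= ger0_norm ?powR_ge0 // lee_fin.
  by apply: ge0_ler_powR; rewrite ?nnegrE ?normr_ge0 ?(ltW p0) ?norm_sub_truncate_le.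
have [_ int_cvg _] :=
  dominated_convergence measurableT m_dist (measurable_cst _) dist_cvg Yp_int dist_dom.
have lt_ep : open_nbhs (0%E : \bar R) [set y | y < (e `^ p)%:E]%E.
  by split; [exact: open_ereal_lt_ereal | rewrite /= lte_fin powR_gt0].
have [N _ HN] := int_cvg _ (open_nbhs_nbhs lt_ep).
exists N; apply/(Lp_dist_ltP P _ _ _ _ p0 e0); move: (HN N (leqnn N)) => /=.
by congr (_ < _)%E; apply: eq_integral => w _; rewrite subr0 ger0_norm // powR_ge0.
Qed.

End truncation.

Section index_attained.
Context {d : measure_display} {Omega : measurableType d} {R : realType}.
Variable P : probability Omega R.
Variables q alpha : R.
Hypothesis q_gt0 : 0 < q.

Lemma A_u_truncate (n : nat) (Y : Omega -> R) : measurable_fun setT Y ->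
  (\int[P]_w (`|Y w| `^ q)%:E <= (- alpha)%:E)%E -> A_u P q alpha (truncate n Y).
Proof.
move=> mY IY; split; first exact: Linf_truncate.
rewrite integral_u_q // leeNr -EFinN; apply: le_trans IY.
apply: ge0_le_integral => //.
- by move=> w _; rewrite lee_fin powR_ge0.
- exact/measurable_EFin_powR/measurable_funrneg/measurable_truncate.
- exact/measurable_EFin_powR/measurableT_comp.
move=> w _; rewrite lee_fin; apply: ge0_ler_powR; rewrite ?nnegrE ?(ltW q_gt0) //.
  by rewrite le_max lexx orbT.
rewrite ge_max normr_ge0 andbT (le_trans _ (norm_truncate_le n Y w)) //.
by rewrite -normrN ler_norm.
Qed.

Lemma Lp_closure_A_u (Y : Omega -> R) : Lp P q Y ->
  (\int[P]_w (`|Y w| `^ q)%:E <= (- alpha)%:E)%E -> Lp_closure P q (A_u P q alpha) Y.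
Proof.
move=> LY IY; split => // e e0.
have [n Yn] := Lp_dist_truncate_lt P _ _ _ q_gt0 e0 LY.
by exists (truncate n Y) => //; exact: A_u_truncate LY.1 IY.
Qed.

Lemma Lp_int_nonempty_A_u : alpha < 0 ->
  Lp_int_nonempty P q (Lp_closure P q (A_u P q alpha)).
Proof.
move=> alpha_lt0; have c0 : 0 < - alpha by rewrite oppr_gt0.
have L0 : Lp P q (cst 0).
  apply: Lp_integral_ltyP q_gt0 (measurable_cst _) _.
  by under eq_integral do rewrite normr0 powR0 ?gt_eqF //; rewrite integral0 ltry.
exists (cst 0); split => //; exists ((- alpha) `^ q^-1); first exact: powR_gt0.
move=> Y LY /(Lp_dist_ltP P _ _ _ _ q_gt0 (powR_gt0 _ c0)) dY.
apply: Lp_closure_A_u => //; apply: ltW; move: dY; congr (_ < _)%E.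
- by apply: eq_integral => w _; rewrite subr0.
- by rewrite -powRrM mulVf ?gt_eqF // powRr1 // ltW.
Qed.

End index_attained.

(* For p < q the quantity (3 L)^p * (2 c / L^q) = 2 c 3^p / L^(q-p) tends to 0. *)
Lemma small_mass_level {R : realType} {c eps p q : R} (M : R) :
  0 < c -> 0 < p -> p < q -> 0 < eps ->
  exists2 del, 0 < del & forall L, 0 < L -> 2 * c / L `^ q <= del ->
    M <= L /\ (3 * L) `^ p * (2 * c / L `^ q) < eps `^ p.
Proof.
move=> c0 p0 pq eps0; have qp0 : 0 < q - p by rewrite subr_gt0.
have q0 : 0 < q := lt_trans p0 pq.
set K := (2 * c * 3 `^ p / eps `^ p) `^ (q - p)^-1.
have K0 : 0 <= K by exact: powR_ge0.
set T := Num.max M (K + 1).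
have T0 : 0 < T by rewrite lt_max; apply/orP; right; lra.
exists (2 * c / T `^ q); first by rewrite divr_gt0 ?mulr_gt0 ?powR_gt0.
move=> L L0; rewrite ler_pM2l ?mulr_gt0 // lef_pV2 ?posrE ?powR_gt0 // => TL.
have {}TL : T <= L.
  rewrite leNgt; apply/negP => LT; move: TL; apply/negP; rewrite -ltNge.
  by apply: gt0_ltr_powR; rewrite ?nnegrE ?(ltW L0) ?(ltW T0).
split; first by apply: le_trans TL; rewrite le_max lexx.
have KL : K `^ (q - p) < L `^ (q - p).
  apply: gt0_ltr_powR; rewrite ?nnegrE ?(ltW L0) //.
  by apply: lt_le_trans TL; rewrite lt_max; apply/orP; right; lra.
rewrite -powRrM mulVf ?gt_eqF // powRr1 in KL; last first.
  by rewrite divr_ge0 ?powR_ge0 // mulr_ge0 ?powR_ge0 // mulr_ge0 // ltW.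
have Lqp : L `^ q = L `^ (q - p) * L `^ p by rewrite -powRD ?subrK // implybE gt_eqF.
rewrite ltr_pdivrMr ?powR_gt0 // in KL.
rewrite powRM ?(ltW L0) // Lqp.
have a0 := powR_gt0 p L0; have r0 := powR_gt0 (q - p) L0.
rewrite (_ : _ * _ * _ = 2 * c * 3 `^ p / L `^ (q - p)); last first.
  by field; rewrite !gt_eqF.
by rewrite ltr_pdivrMr // [eps `^ p * _]mulrC.
Qed.

Section index_lower_bound.
Context {d : measure_display} {Omega : measurableType d} {R : realType}.
Variable P : probability Omega R.
Implicit Types (p y : R) (B : set Omega) (X : Omega -> R).

Lemma measurable_patch_cst y B X : measurable B -> measurable_fun setT X ->
  measurable_fun setT (patch X B (cst y)).
Proof.
by move=> mB mX; apply: measurable_fun_ifT => //; exact: measurable_fun_mem.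
Qed.

Lemma Lp_patch_cst p y B X : 0 < p -> measurable B -> Lp P p X ->
  Lp P p (patch X B (cst y)).
Proof.
move=> p0 mB LX; have mX := LX.1.
apply: Lp_integral_ltyP => //; first exact: measurable_patch_cst.
apply: (@le_lt_trans _ _ (\int[P]_w (`|X w| `^ p + `|y| `^ p)%:E)%E).
  apply: ge0_le_integral => //.
  - exact/measurable_EFin_powR/measurableT_comp/measurable_patch_cst.
  - apply/measurable_EFinP/measurable_funD; last exact: measurable_cst.
    by apply: measurableT_comp (measurable_powR _) _; exact: measurableT_comp.
  move=> w _; rewrite lee_fin /patch; case: ifPn => _ /=.
    by rewrite lerDr powR_ge0.
  by rewrite lerDl powR_ge0.
under eq_integral do rewrite EFinD.
rewrite ge0_integralD //; last exact/measurable_EFin_powR/measurableT_comp.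
rewrite integral_cst //; apply: lte_add_pinfty (Lp_integral_lty P _ _ p0 LX) _.
by rewrite -ge0_fin_numE ?mule_ge0 ?lee_fin ?powR_ge0 // fin_numM ?fin_num_measure.
Qed.

Lemma integral_dist_patch_cst_le p y K B X : 0 < p -> 0 <= K -> measurable B ->
  measurable_fun setT X -> (forall w, B w -> `|y - X w| <= K) ->
  (\int[P]_w (`|patch X B (cst y) w - X w| `^ p)%:E <= (K `^ p)%:E * P B)%E.
Proof.
move=> p0 K0 mB mX yK; rewrite -integral_scale_indic ?powR_ge0 //.
apply: ge0_le_integral => //.
- apply/measurable_EFin_powR/measurableT_comp => //.
  by apply: measurable_funB => //; exact: measurable_patch_cst.
- apply/measurable_EFinP; apply: measurable_funM; first exact: measurable_cst.
  exact: measurable_indic.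
move=> w _; rewrite lee_fin indicE /patch; case: ifPn => [/set_mem Bw|_] /=.
  by rewrite mulr1 ge0_ler_powR ?nnegrE ?(ltW p0) ?yK.
by rewrite subrr normr0 powR0 ?gt_eqF // mulr0.
Qed.

Lemma A_u_far {q alpha p L : R} {B : set Omega} {Y Z : Omega -> R} :
  0 < q -> 0 < p -> 0 < L -> measurable B ->
  ((L `^ q)%:E * P B = (2 * - alpha)%:E)%E ->
  measurable_fun setT Y -> (forall w, B w -> Y w = - (2 * L)) -> A_u P q alpha Z ->
  ((L `^ p)%:E * (P B * 2^-1%:E) <= \int[P]_w (`|Y w - Z w| `^ p)%:E)%E.
Proof.
move=> q0 p0 L0 mB LqB mY YB [[mZ _] AZ].
set S := [set w | Z w < - L].
have mS : measurable S by apply: measurable_set_ltr => //; exact: measurable_cst.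
have tail := u_q_tail P q0 L0 mZ AZ.
apply: le_trans (le_integral_powR_measure P p0 (ltW L0) (measurableD mB mS) _ _).
- apply: lee_wpmul2l; first by rewrite lee_fin powR_ge0.
  have mBS := measurableI _ _ mB mS.
  have PBS : P (B `\` S) = (P B - P (B `&` S))%E.
    by rewrite measureD // -ge0_fin_numE ?measure_ge0 ?fin_num_measure.
  have BS_S : (P (B `&` S) <= P S)%E by apply: le_measure; rewrite ?inE.
  have [b Pb] : exists b, P B = b%:E by exists (fine (P B)); rewrite probability_fineK.
  have [s Ps] : exists s, P (B `&` S) = s%:E.
    by exists (fine (P (B `&` S))); rewrite probability_fineK.
  have [t Pt] : exists t, P S = t%:E by exists (fine (P S)); rewrite probability_fineK.
  rewrite PBS Pb Ps -EFinM lee_fin; rewrite Ps Pt lee_fin in BS_S.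
  rewrite Pb -EFinM in LqB; rewrite Pt -EFinM lee_fin in tail; case: LqB => LqB.
  have := powR_gt0 q L0; nra.
- by apply: measurable_funB.
move=> w [Bw /negP]; rewrite /S /= -leNgt YB // => ZL.
by rewrite ler_normr; apply/orP; right; lra.
Qed.

Lemma exists_pinned_perturbation {p q c eps : R} {X : Omega -> R} : nonatomic P -> 0 < p -> p < q ->
  0 < c -> 0 < eps -> Lp P p X ->
  exists B L, [/\ measurable B, 0 < L, ((L `^ q)%:E * P B = (2 * c)%:E)%E
    & (Lp_dist P p (patch X B (cst (- (2 * L))%R)) X < eps%:E)%E].
Proof.
move=> P_na p0 pq c0 eps0 LX; have q0 : 0 < q := lt_trans p0 pq.
have [M PM] := exists_bounded_set P LX.1.
have mXM : measurable [set w | `|X w| <= M%:R].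
  by apply: measurable_set_ler; [exact: measurableT_comp LX.1 | exact: measurable_cst].
have [del del0 level] := small_mass_level M%:R c0 p0 pq eps0.
have [B [mB BX PB0 PBdel]] := nonatomic_small_subset P P_na mXM PM del0.
have [b Pb] : exists b, P B = b%:E by exists (fine (P B)); rewrite probability_fineK.
rewrite Pb lte_fin lee_fin in PB0 PBdel.
pose L := (2 * c / b) `^ q^-1.
have L0 : 0 < L by rewrite powR_gt0 // divr_gt0 ?mulr_gt0.
have LqB : L `^ q * b = 2 * c.
  by rewrite -powRrM mulVf ?gt_eqF // powRr1 ?divfK ?gt_eqF // divr_ge0 ?mulr_ge0 ?ltW.
have bE : 2 * c / L `^ q = b by rewrite -LqB mulrAC divff ?mul1r // gt_eqF // powR_gt0.
have [ML Lsmall] : M%:R <= L /\ (3 * L) `^ p * b < eps `^ p.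
  by rewrite -bE; apply: level; rewrite ?bE.
exists B, L; split; rewrite ?Pb -?EFinM ?LqB //.
apply/(Lp_dist_ltP P _ _ _ _ p0 eps0).
apply: (@le_lt_trans _ _ (((3 * L) `^ p)%:E * P B)%E); last by rewrite Pb -EFinM.
apply: integral_dist_patch_cst_le; rewrite ?mulr_ge0 ?(ltW L0) //; first exact: LX.1.
move=> w /BX /= Xw; rewrite -opprD normrN (le_trans (ler_normD _ _)) //.
by rewrite ger0_norm ?mulr_ge0 ?(ltW L0) //; lra.
Qed.

Lemma not_Lp_int_nonempty_A_u p q alpha : nonatomic P -> 0 < p -> p < q ->
  alpha < 0 -> ~ Lp_int_nonempty P p (Lp_closure P p (A_u P q alpha)).
Proof.
move=> P_na p0 pq alpha0 [X [LX [eps eps0 ball]]].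
have q0 : 0 < q := lt_trans p0 pq.
have c0 : 0 < - alpha by rewrite oppr_gt0.
have [B [L [mB L0 LqB dYX]]] := exists_pinned_perturbation P_na p0 pq c0 eps0 LX.
set Y := patch X B (cst (- (2 * L))).
have LY : Lp P p Y by exact: Lp_patch_cst.
have [_ Y_closure] := ball Y LY dYX.
have [b Pb] : exists b, P B = b%:E by exists (fine (P B)); rewrite probability_fineK.
have b0 : 0 < b.
  move: LqB; rewrite Pb -EFinM => -[LqB].
  by rewrite -(pmulr_rgt0 _ (powR_gt0 q L0)) LqB mulr_gt0.
have e0 : 0 < L * (b / 2) `^ p^-1 by rewrite mulr_gt0 // powR_gt0 // divr_gt0.
have [Z AZ /(Lp_dist_ltP P _ _ _ _ p0 e0)] := Y_closure _ e0.
have -> : (L * (b / 2) `^ p^-1) `^ p = L `^ p * (b / 2).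
  rewrite powRM ?(ltW L0) ?powR_ge0 // -powRrM mulVf ?gt_eqF // powRr1 //.
  by rewrite divr_ge0 // ltW.
apply/negP; rewrite -leNgt.
have -> : ((L `^ p * (b / 2))%:E = (L `^ p)%:E * (P B * 2^-1%:E))%E by rewrite Pb.
apply: (A_u_far q0 p0 L0 mB LqB _ _ AZ).
- by apply: measurable_patch_cst => //; exact: LX.1.
- by move=> w Bw; rewrite /Y /patch mem_set.
Qed.

End index_lower_bound.

(* The traded asset and the finiteness of rho are not needed: the index only
   depends on the acceptance set. *)
Theorem corollary6p8 (d : measure_display) (Omega : measurableType d)
  (R : realType) (P : probability Omega R) (q alpha S0 : R) (ST : Omega -> R) :
  nonatomic P -> 1 <= q -> alpha < 0 ->
  traded_asset P S0 ST -> Linf P ST ->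
  rho_finite_on_Linf P (A_u P q alpha) S0 ST ->
  index_fin P (A_u P q alpha) = q%:E /\ index_set P (A_u P q alpha) q.
Proof.
move=> P_na q1 alpha0 _ _ _.
have q_index : index_set P (A_u P q alpha) q.
  by split=> //; apply: Lp_int_nonempty_A_u alpha0; exact: lt_le_trans q1.
split=> //; apply/eqP; rewrite eq_le; apply/andP; split.
  by apply: ereal_inf_lbound; exists q.
apply: le_ereal_inf_tmp => _ [p [p1 p_int] <-]; rewrite lee_fin leNgt.
apply/negP => pq; apply: not_Lp_int_nonempty_A_u p_int => //.
exact: lt_le_trans p1.
Qed.
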